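(* Assume (K1), (K2), (L), (W1)–(W3) and the exponent conditions $\frac1{q_\Phi}=\frac1{q_{\mathsf F}}+\frac1{q_{\mathsf P}}$, $q_\Phi>d$, $\tilde q>d$ with $\frac1{\tilde q}=\frac2{q_\gamma}+\frac1{q_{\mathsf G}}$. Then: (i) for every $C_P>0$ there exist $C_B>0$ and $\bar r>0$ such that for all $x\in\Omega$, all $P\in\mathrm{GL}^+(d)$ with $|P|+|P^{-1}|\le C_P$, all $F\in\mathrm{GL}^+(d)$ and all $N\in\mathbb R^{d\times d}$ with $|N-\mathbf 1|<\bar r$, $|B(x,F,NP)-B(x,F,P)|\le C_B|N-\mathbf 1|\,(W(x,FP^{-1})+1)$; (ii) for every $C_P>0$ there exist $C_W>0$ and $\tilde r>0$ such that for all $x\in\Omega$, all $P_1,P_2\in\mathrm{GL}^+(d)$ with $|P_1|+|P_1^{-1}|\le C_P$ and $|P_1-P_2|\le\tilde r$, and all $F\in\mathrm{GL}^+(d)$, $|W(x,FP_1^{-1})-W(x,FP_2^{-1})-B(x,F,P_1):(P_1-P_2)|\le C_W(W(x,FP_1^{-1})+1)|P_1-P_2|^2$.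
   Context: Notation: $A:C=\mathrm{tr}(AC^\top)$, $|A|$ Frobenius norm, $\mathbf 1$ identity, $\mathrm{GL}^+(d)=\{\det A>0\}$, $A^{-\top}=(A^{-1})^\top$, $\mathbb M(F)$ the vector of all minors of $F$ (length $\mu_d$). $\Omega\subset\mathbb R^d$ bounded Lipschitz domain, $T>0$, exponents $q_\Phi,q_{\mathsf F},q_{\mathsf P},q_{\mathsf G},q_\gamma>1$ with $q_{\mathsf G}>d$. (K1) $K:\mathbb R^{d\times d}\to(-\infty,\infty]$ is $C^2$ on $\mathrm{GL}^+(d)$; (K2) $K(P)\ge C_1(|P|^{q_{\mathsf P}}+\det(P)^{-q_\gamma})-C_2$ on $\mathrm{GL}^+(d)$, $C_1,C_2>0$, $q_{\mathsf P},q_\gamma>d$. (L) $\ell\in C^1([0,T];W^{1,q_\Phi}(\Omega;\mathbb R^d)^* )$. $W:\Omega\times\mathbb R^{d\times d}\to[0,\infty]$ with $W(x,F)<\infty$ iff $F\in\mathrm{GL}^+(d)$ and: (W1) there are $j\in L^1(\Omega)$, $q_{\mathsf F}>d$, $C_3>0$ with $W(x,F)\ge j(x)+C_3|F|^{q_{\mathsf F}}$; (W2) $W(x,F)=\mathbb W(x,\mathbb M(F))$ for a normal integrand $\mathbb W$ convex in its second variable; (W3) there are $\delta,C_4,C_5>0$ such that for all $x\in\Omega$, $F\in\mathrm{GL}^+(d)$, $N$ with $|N-\mathbf 1|<\delta$: $W(x,\cdot)$ is differentiable on $\mathrm{GL}^+(d)$, $|F^\top\mathrm D_FW(x,F)|\le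 C_4(W(x,F)+1)$, and $|F^\top\mathrm D_FW(x,F)-(FN)^\top\mathrm D_FW(x,FN)|\le C_5|N-\mathbf 1|(W(x,F)+1)$. $B(x,F,P):=-(FP^{-1})^\top\mathrm D_FW(x,FP^{-1})P^{-\top}$ for $F,P\in\mathrm{GL}^+(d)$. *)

From HB Require Import structures.
From mathcomp Require Import all_boot all_order all_algebra.
From mathcomp Require Import all_classical all_reals all_analysis.
Import Order.TTheory GRing.Theory Num.Theory.
Import numFieldNormedType.Exports.

Set Implicit Arguments.
Unset Strict Implicit.
Unset Printing Implicit Defensive.

Local Open Scope classical_set_scope.
Local Open Scope ring_scope.

Section Defs.
Variable R : realType.

Definition frob d (A : 'M[R]_d) : R := Num.sqrt (\sum_i \sum_j A i j ^+ 2).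

Definition frob_inner d (A C : 'M[R]_d) : R := \tr (A *m C^T).

Definition GLp d (A : 'M[R]_d) : Prop := 0 < \det A.

Definition grad d (f : 'M[R]_d -> R) (F : 'M[R]_d) : 'M[R]_d :=
  \matrix_(i, j) ('d f F (delta_mx i j : 'M[R]_d)).

(* real-valued version of W(x, .) (W is finite exactly on GL^+(d)) *)
Definition Wre d (W : 'rV[R]_d -> 'M[R]_d -> \bar R) (x : 'rV[R]_d)
  : 'M[R]_d -> R := fun G => fine (W x G).

Definition Bstress d (W : 'rV[R]_d -> 'M[R]_d -> \bar R) (x : 'rV[R]_d)
  (F P : 'M[R]_d) : 'M[R]_d :=
  - (((F *m invmx P)^T *m grad (Wre W x) (F *m invmx P)) *m (invmx P)^T).

Definition natmx d (F : 'M[R]_d) (i j : nat) : R :=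
  match (insub i : option 'I_d), (insub j : option 'I_d) with
  | Some i', Some j' => F i' j'
  | _, _ => 0
  end.

(* the minor of F with (increasingly ordered) row set I and column set J *)
Definition minor d (F : 'M[R]_d) (I J : {set 'I_d}) : R :=
  \det (\matrix_(a < #|I|, b < #|I|)
          natmx F (nth 0%N [seq val k | k <- enum I] a)
                  (nth 0%N [seq val k | k <- enum J] b)).

Definition mindex d := {p : {set 'I_d} * {set 'I_d} |
  (#|p.1| == #|p.2|) && (0 < #|p.1|)%N}.

Definition mu d : nat := #|{: mindex d}|.

Definition minors d (F : 'M[R]_d) : 'rV[R]_(mu d) :=
  \row_(k < mu d) (let p := val (@enum_val (mindex d) predT k) in
                   minor F p.1 p.2).

Definition econvex n (f : 'rV[R]_n -> \bar R) : Prop :=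
  forall (u v : 'rV[R]_n) (t : R), 0 <= t <= 1 ->
    (f ((1 - t) *: u + t *: v)%R <= ((1 - t)%:E * f u + t%:E * f v)%E)%E.

Definition C2_on d (U : set 'M[R]_d) (f : 'M[R]_d -> R) : Prop :=
  open U /\
  forall P, U P ->
    {for P, continuous f} /\
    forall u v : 'M[R]_d,
      derivable f P u /\
      {for P, continuous (fun Q => derive f Q u)} /\
      derivable (fun Q => derive f Q u) P v /\
      {for P, continuous (fun Q => derive (fun Q' => derive f Q' u) Q v)}.

End Defs.

(* Write G = F P^-1 and let S(G) = G^T D W(G) be the Mandel stress, so that
   B(F, P) = - S(G) P^-T; hypothesis (W3) says that S is bounded by W + 1 and
   Lipschitz under right multiplication by matrices near the identity.
   (i) Since F (N P)^-1 = G N^-1 and N^-1 is as close to 1 as N, the bound on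
   B(F, N P) - B(F, P) is the Lipschitz bound for S at G in the direction N^-1.
   (ii) With D = P1 - P2 and E = D P2^-1 we have F P2^-1 = G (1 + E). The mean
   value theorem along t |-> G (1 + t E) gives
   W(G (1 + E)) - W(G) = S(G (1 + c E)) : (1 + c E)^-1 E, which differs from
   S(G) : E by O((W(G) + 1) |E|^2), while B(F, P1) : D = - S(G) : D P1^-1 and the
   resolvent identity D P1^-1 = E - E D P1^-1 account for the remaining O(|D|^2).
   Invertibility near the identity comes from det (1 + t E) > 0 for |E| < 1. *)

From HB Require Import structures.
From mathcomp Require Import all_boot all_order all_algebra.
From mathcomp Require Import all_classical all_reals all_analysis.
From mathcomp Require Import ring lra.
Import Order.TTheory GRing.Theory Num.Theory.
Import numFieldNormedType.Exports.
Local Open Scope classical_set_scope.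
Local Open Scope ring_scope.

Set Implicit Arguments.
Unset Strict Implicit.
Unset Printing Implicit Defensive.

Section Frobenius.
Variables (R : realType) (d : nat).
Implicit Types (A B C : 'M[R]_d).

Lemma sum_mul_sqr_le (I : finType) (a b : I -> R) :
  (\sum_i a i * b i) ^+ 2 <= (\sum_i a i ^+ 2) * (\sum_i b i ^+ 2).
Proof.
have amgm i j : 2 * ((a i * b i) * (a j * b j)) <=
    a i ^+ 2 * b j ^+ 2 + a j ^+ 2 * b i ^+ 2.
  by rewrite -subr_ge0 (_ : _ - _ = (a i * b j - a j * b i) ^+ 2) ?sqr_ge0 //; ring.
rewrite expr2 !big_distrlr /= -(ler_pM2l (ltr0Sn _ 1)) [leRHS]mulr_natl mulr2n.
rewrite [X in _ <= _ + X]exchange_big -big_split mulr_sumr /=; apply: ler_sum => i _.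
by rewrite -big_split mulr_sumr /=; apply: ler_sum => j _; apply: amgm.
Qed.

Lemma frob_innerE A B : frob_inner A B = \sum_i \sum_j A i j * B i j.
Proof.
by apply: eq_bigr => i _; rewrite mxE; apply: eq_bigr => j _; rewrite mxE.
Qed.

Lemma frob_innerC A B : frob_inner A B = frob_inner B A.
Proof. by rewrite /frob_inner -mxtrace_tr trmx_mul trmxK. Qed.

Lemma frob_innerDl A B C : frob_inner (A + B) C = frob_inner A C + frob_inner B C.
Proof. by rewrite /frob_inner mulmxDl mxtraceD. Qed.

Lemma frob_innerDr A B C : frob_inner A (B + C) = frob_inner A B + frob_inner A C.
Proof. by rewrite frob_innerC frob_innerDl !(frob_innerC A). Qed.

Lemma frob_innerNl A B : frob_inner (- A) B = - frob_inner A B.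
Proof. by rewrite /frob_inner mulNmx linearN. Qed.

Lemma frob_innerBl A B C : frob_inner (A - B) C = frob_inner A C - frob_inner B C.
Proof. by rewrite frob_innerDl frob_innerNl. Qed.

Lemma frob_innerBr A B C : frob_inner A (B - C) = frob_inner A B - frob_inner A C.
Proof. by rewrite frob_innerC frob_innerBl !(frob_innerC A). Qed.

Lemma frob_inner_mulmxl A B C : frob_inner (A *m B) C = frob_inner A (C *m B^T).
Proof. by rewrite /frob_inner trmx_mul trmxK mulmxA. Qed.

Lemma frob_inner_mulmxr A B C : frob_inner A (B *m C) = frob_inner (B^T *m A) C.
Proof. by rewrite /frob_inner trmx_mul mulmxA mxtrace_mulC !mulmxA. Qed.

Lemma frob_ge0 A : 0 <= frob A.
Proof. exact: sqrtr_ge0. Qed.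

Lemma frob_sqrE A : frob A ^+ 2 = \sum_i \sum_j A i j ^+ 2.
Proof. by rewrite sqr_sqrtr //; do 2![apply: sumr_ge0 => ? _]; rewrite sqr_ge0. Qed.

Lemma frob_sqr A : frob A ^+ 2 = frob_inner A A.
Proof. by rewrite frob_sqrE frob_innerE; do 2![apply: eq_bigr => ? _]; rewrite expr2. Qed.

Lemma frob_le A c : 0 <= c -> frob A ^+ 2 <= c ^+ 2 -> frob A <= c.
Proof. by move=> c0; rewrite ler_pXn2r ?nnegrE ?frob_ge0. Qed.

Lemma frob_eq0 A : (frob A == 0) = (A == 0).
Proof.
apply/idP/eqP => [/eqP A0 | ->]; last first.
  by rewrite /frob big1 ?sqrtr0 // => i _; rewrite big1 // => j _; rewrite mxE expr0n.
have sum0 : \sum_i \sum_j A i j ^+ 2 = 0 by rewrite -frob_sqrE A0 expr0n.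
have row_ge0 i : 0 <= \sum_j A i j ^+ 2 by apply: sumr_ge0 => j _; rewrite sqr_ge0.
apply/matrixP => i j; rewrite mxE; apply/eqP; rewrite -sqrf_eq0; apply/eqP.
have := psumr_eq0P (fun i _ => row_ge0 i) sum0 (i := i) isT.
by move/(psumr_eq0P (fun j _ => sqr_ge0 (A i j))); apply.
Qed.

Lemma frob_inner_le A B : `|frob_inner A B| <= frob A * frob B.
Proof.
rewrite -[X in _ <= X]ger0_norm ?mulr_ge0 ?frob_ge0 //.
rewrite -ler_sqr ?nnegrE ?normr_ge0 // !real_normK ?num_real // exprMn !frob_sqr.
rewrite !frob_innerE !pair_big /=.
exact: sum_mul_sqr_le (fun p => A p.1 p.2) (fun p => B p.1 p.2).
Qed.

Lemma frobZ c A : frob (c *: A) = `|c| * frob A.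
Proof.
rewrite /frob -sqrtr_sqr -sqrtrM ?sqr_ge0 // mulr_sumr; congr Num.sqrt.
by apply: eq_bigr => i _; rewrite mulr_sumr; apply: eq_bigr => j _; rewrite mxE exprMn.
Qed.

Lemma frobN A : frob (- A) = frob A.
Proof. by rewrite -scaleN1r frobZ normrN1 mul1r. Qed.

Lemma frob_tr A : frob A^T = frob A.
Proof.
by rewrite /frob exchange_big; congr Num.sqrt; do 2![apply: eq_bigr => ? _]; rewrite mxE.
Qed.

Lemma frobD A B : frob (A + B) <= frob A + frob B.
Proof.
apply: frob_le; first by rewrite addr_ge0 ?frob_ge0.
have AB := le_trans (ler_norm _) (frob_inner_le A B).
rewrite frob_sqr frob_innerDl !frob_innerDr -!frob_sqr (frob_innerC B A) sqrrD.
lra.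
Qed.

Lemma frobM A B : frob (A *m B) <= frob A * frob B.
Proof.
apply: frob_le; first by rewrite mulr_ge0 ?frob_ge0.
rewrite exprMn !frob_sqrE [X in _ * X]exchange_big big_distrlr /=.
apply: ler_sum => i _; apply: ler_sum => k _; rewrite mxE.
exact: sum_mul_sqr_le.
Qed.

Lemma frob_mulmx_sub_le A B M C :
  frob (A *m M *m C - B *m C) <=
  (frob (A - B) * frob M + frob B * frob (M - 1%:M)) * frob C.
Proof.
have -> : A *m M *m C - B *m C = ((A - B) *m M + B *m (M - 1%:M)) *m C.
  by rewrite mulmxBr mulmx1 mulmxBl addrA subrK mulmxBl.
apply: le_trans (frobM _ _) _; rewrite ler_wpM2r ?frob_ge0 //.
by apply: le_trans (frobD _ _) _; apply: lerD; apply: frobM.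
Qed.

Lemma frob_inner_mulmx_sub_le A B M E :
  `|frob_inner A (M *m E) - frob_inner B E| <=
  frob (A - B) * frob M * frob E + frob B * frob (M - 1%:M) * frob E.
Proof.
have -> : frob_inner A (M *m E) - frob_inner B E =
    frob_inner (A - B) (M *m E) + frob_inner B ((M - 1%:M) *m E).
  by rewrite frob_innerBl mulmxBl mul1mx frob_innerBr addrA subrK.
apply: le_trans (ler_normD _ _) _; rewrite -!mulrA.
by apply: lerD; apply: le_trans (frob_inner_le _ _) _; rewrite ler_wpM2l ?frob_ge0 ?frobM.
Qed.

End Frobenius.

Section NearIdentity.
Variables (R : realType) (d : nat).
Implicit Types (A B E : 'M[R]_d).

Lemma GLp_unitmx A : GLp A -> A \in unitmx.
Proof. by move=> A0; rewrite unitmxE unitfE gt_eqF. Qed.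

Lemma GLpM A B : GLp A -> GLp B -> GLp (A *m B).
Proof. by rewrite /GLp det_mulmx; apply: mulr_gt0. Qed.

Lemma GLpV A : GLp A -> GLp (invmx A).
Proof. by rewrite /GLp det_inv invr_gt0. Qed.

(* The casts elaborate the products over the ring structure of [R] rather than
   that of [invmx], so that [mulmxA] can later rewrite across them. *)
Lemma invmxM A B : A \in unitmx -> B \in unitmx ->
  invmx (A *m B) = (invmx B : 'M[R]_d) *m (invmx A : 'M[R]_d).
Proof.
move=> uA uB; have uAB : A *m B \in unitmx by rewrite unitmx_mul uA.
have inv : (A *m B) *m (invmx B *m invmx A) = 1%:M by rewrite mulmxA mulmxK ?mulmxV.
by rewrite -[LHS]mulmx1 -inv mulmxA mulVmx ?mul1mx.
Qed.

Lemma invmxB A B : A \in unitmx -> B \in unitmx ->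
  invmx A - invmx B = - ((invmx B : 'M[R]_d) *m (A - B) *m (invmx A : 'M[R]_d)).
Proof. by move=> uA uB; rewrite mulmxBr mulmxBl mulmxK // mulVmx // mul1mx opprB. Qed.

Lemma det_add1_neq0 E : frob E < 1 -> \det (1%:M + E) != 0.
Proof.
move=> E1; apply/negP => /eqP det0.
pose V := kermx (1%:M + E).
have V0 : V != 0 by rewrite kermx_eq0 row_free_unit unitmxE det0 unitr0.
have VE : V = - (V *m E).
  by apply/eqP; rewrite -subr_eq0 opprK -{1}[V]mulmx1 -mulmxDr mulmx_ker.
have V_gt0 : 0 < frob V by rewrite lt_def frob_ge0 frob_eq0 V0.
have : frob V * 1 <= frob V * frob E by rewrite mulr1 {1}VE frobN frobM.
by rewrite ler_pM2l // leNgt E1.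
Qed.

Lemma GLp_add1 E : frob E < 1 -> GLp (1%:M + E).
Proof.
move=> E1; pose p : {poly R} := \det (1%:M + 'X *: map_mx polyC E).
have pE t : p.[t] = \det (1%:M + t *: E).
  rewrite -horner_evalE -det_map_mx; congr (\det _); apply/matrixP => i j.
  by rewrite !mxE /= horner_evalE hornerD hornerM hornerX hornerC hornerMn hornerC.
rewrite /GLp ltNge; apply/negP => det_le0.
have [||c /[!in_itv]/andP[c0 c1]] := @IVT R (horner p) 0 1 0 ler01.
- exact/continuous_subspaceT/continuous_horner.
- by rewrite !pE scale0r addr0 det1 scale1r ge_min le_max det_le0 ler01 !orbT.
rewrite pE; apply/eqP/det_add1_neq0.
by rewrite frobZ ger0_norm //; apply: le_lt_trans E1; rewrite ler_piMl ?frob_ge0.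
Qed.

Lemma frob_invmx_add1_sub1 E : frob E <= 1/2 ->
  frob (invmx (1%:M + E) - 1%:M) <= 2 * frob E.
Proof.
move=> E_half; set X := _ - 1%:M.
have uN : 1%:M + E \in unitmx by apply/GLp_unitmx/GLp_add1; lra.
have XE : X = - (E + E *m X).
  have := mulmxV uN; rewrite mulmxDl mul1mx => inv.
  apply/eqP; rewrite -subr_eq0 opprK mulmxBr mulmx1 [E + _]addrC subrK.
  by rewrite /X addrAC inv subrr.
have := frobD E (E *m X); rewrite -frobN -XE.
have := frobM E X; have := frob_ge0 X; have := frob_ge0 E; nra.
Qed.

Lemma frob_invmx_add1 E : frob E <= 1/2 ->
  frob (invmx (1%:M + E)) <= frob (1%:M : 'M[R]_d) + 1.
Proof.
move=> E_half; rewrite -[invmx _](subrK 1%:M) addrC.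
apply: le_trans (frobD _ _) _; rewrite lerD2l.
by apply: le_trans (frob_invmx_add1_sub1 E_half) _; lra.
Qed.

Lemma frob_invmx_perturb A B : A \in unitmx ->
  frob (invmx A) * frob (A - B) <= 1/2 ->
  frob (invmx B) <= (frob (1%:M : 'M[R]_d) + 1) * frob (invmx A).
Proof.
move=> uA small; set E := - (invmx A *m (A - B)).
have E_half : frob E <= 1/2 by rewrite frobN; apply: le_trans (frobM _ _) small.
have uE : 1%:M + E \in unitmx by apply/GLp_unitmx/GLp_add1; lra.
have -> : B = A *m (1%:M + E).
  by rewrite mulmxDr mulmx1 mulmxN mulKVmx // opprB addrC subrK.
rewrite invmxM //; apply: le_trans (frobM _ _) _.
by rewrite ler_wpM2r ?frob_ge0 ?frob_invmx_add1.
Qed.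

End NearIdentity.

Section Derivative.
Variable R : realType.

Lemma is_derive_line (V : normedModType R) (f : V -> R) (G H : V) (t : R) :
  differentiable f (G + t *: H) ->
  is_derive t 1 (fun s => f (G + s *: H)) ('d f (G + t *: H) H).
Proof.
move=> /differentiableP df.
have line : is_diff t (fun s : R => G + s *: H) ( *:%R^~ H).
  by apply: is_diff_eq; rewrite add0r.
have comp := is_diff_comp line df.
have := derivableP (@diff_derivable _ _ _ _ t 1 (@ex_diff _ _ _ _ _ _ _ comp)).
by rewrite deriveE // diff_val /= scale1r.
Qed.

Lemma MVT_diff_segment (V : normedModType R) (f : V -> R) (G H : V) :
  (forall t, 0 <= t <= 1 -> differentiable f (G + t *: H)) ->
  exists2 c, 0 <= c <= 1 & f (G + H) - f G = 'd f (G + c *: H) H.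
Proof.
move=> df.
have der (t : R) : t \in `[0, 1] ->
    is_derive t 1 (fun s => f (G + s *: H)) ('d f (G + t *: H) H).
  by rewrite in_itv => /df /is_derive_line.
have cont : {within `[0, 1], continuous (fun s => f (G + s *: H))}.
  by apply: derivable_within_continuous => t /der /(@ex_derive _ _ _ _ _ _ _).
have [c /[!in_itv] c01] := MVT_segment ler01 (fun t t01 => der t (subset_itv_oo_cc t01)) cont.
rewrite scale1r scale0r addr0 subr0 mulr1 => ->.
by exists c.
Qed.

Lemma diff_gradE d (f : 'M[R]_d -> R) (X H : 'M[R]_d) :
  'd f X H = frob_inner (grad f X) H.
Proof.
rewrite frob_innerE {1}(matrix_sum_delta H) linear_sum; apply: eq_bigr => i _.
by rewrite linear_sum; apply: eq_bigr => j _; rewrite linearZ /= mxE mulrC.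
Qed.

End Derivative.

Definition mandel (R : realType) d (f : 'M[R]_d -> R) (F : 'M[R]_d) : 'M[R]_d :=
  F^T *m grad f F.

Section StressEstimates.
Variables (R : realType) (d : nat) (W : 'rV[R]_d -> 'M[R]_d -> \bar R).
Variables (x : 'rV[R]_d) (delta C4 C5 : R).
Local Notation w := (Wre W x).
Local Notation cinv := (frob (1%:M : 'M[R]_d) + 1).
Local Notation r0 := (Num.min (1/2) (delta / 2)).

Hypothesis delta_gt0 : 0 < delta.
Hypothesis W_ge0 : forall F, (0 <= W x F)%E.
Hypothesis C4_ge0 : 0 <= C4.
Hypothesis C5_ge0 : 0 <= C5.
Hypothesis w_diff : forall F, GLp F -> differentiable w F.
Hypothesis mandel_le : forall F, GLp F -> frob (mandel w F) <= C4 * (w F + 1).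
Hypothesis mandel_lipschitz : forall F N : 'M[R]_d, GLp F -> frob (N - 1%:M) < delta ->
  GLp (F *m N) -> frob (mandel w F - mandel w (F *m N)) <= C5 * frob (N - 1%:M) * (w F + 1).

Lemma w_ge0 F : 0 <= w F.
Proof. exact/fine_ge0/W_ge0. Qed.

Lemma Bstress_mulmxl_lipschitz (P F N : 'M[R]_d) (a : R) :
  GLp P -> GLp F -> frob (invmx P) <= a -> frob (N - 1%:M) < r0 ->
  frob (Bstress W x F (N *m P) - Bstress W x F P) <=
  (2 * C5 * cinv + 2 * C4) * a * frob (N - 1%:M) * (w (F *m invmx P) + 1).
Proof.
move=> GP GF Pa; rewrite lt_min => /andP[e_half e_delta].
set e := frob (N - 1%:M) in e_half e_delta *.
have N_eq : 1%:M + (N - 1%:M) = N by rewrite addrC subrK.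
have GN : GLp N by rewrite -N_eq; apply: GLp_add1; apply: lt_trans e_half _; lra.
have -> : Bstress W x F (N *m P) =
    - (mandel w (F *m invmx P *m invmx N) *m (invmx N)^T *m (invmx P)^T).
  by rewrite /Bstress invmxM ?GLp_unitmx // (mulmxA F) (trmx_mul (invmx P)) mulmxA.
set G := F *m invmx P; set M := invmx N.
have GG : GLp G by apply/GLpM/GLpV.
have M1 : frob (M - 1%:M) <= 2 * e.
  by have := frob_invmx_add1_sub1 (ltW e_half); rewrite N_eq.
have Mb : frob M <= cinv by have := frob_invmx_add1 (ltW e_half); rewrite N_eq.
rewrite /Bstress -/G -opprD frobN.
apply: le_trans (frob_mulmx_sub_le _ _ _ _) _.
have s_ge0 : 0 <= w G + 1 by rewrite addr_ge0 ?w_ge0.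
have GGM : GLp (G *m M) by apply/GLpM/GLpV.
have S1S0 : frob (mandel w (G *m M) - mandel w G) <= C5 * (2 * e) * (w G + 1).
  rewrite -frobN opprB; apply: le_trans (mandel_lipschitz GG _ GGM) _.
    by apply: le_lt_trans M1 _; lra.
  by rewrite ler_wpM2r ?ler_wpM2l.
have MT1 : frob (M^T - 1%:M) <= 2 * e by rewrite -trmx1 -raddfB frob_tr.
apply: le_trans (_ : (C5 * (2 * e) * (w G + 1) * cinv + C4 * (w G + 1) * (2 * e)) * a <= _).
  apply: ler_pM; rewrite ?addr_ge0 ?mulr_ge0 ?frob_ge0 ?frob_tr //.
  by apply: lerD; apply: ler_pM; rewrite ?frob_ge0 ?frob_tr ?mandel_le.
lra.
Qed.

Lemma mean_value_mandel (G E : 'M[R]_d) : GLp G -> frob E < 1 ->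
  exists2 c, 0 <= c <= 1 & w (G *m (1%:M + E)) - w G =
    frob_inner (mandel w (G *m (1%:M + c *: E))) (invmx (1%:M + c *: E) *m E).
Proof.
move=> GG E1.
have GLt (t : R) : 0 <= t <= 1 -> GLp (1%:M + t *: E).
  move=> /andP[t0 t1]; apply: GLp_add1; rewrite frobZ ger0_norm //.
  by apply: le_lt_trans E1; rewrite ler_piMl ?frob_ge0.
have line (t : R) : G + t *: (G *m E) = G *m (1%:M + t *: E).
  by rewrite mulmxDr mulmx1 scalemxAr.
have [c c01 mvt] : exists2 c, 0 <= c <= 1 &
    w (G + G *m E) - w G = 'd w (G + c *: (G *m E)) (G *m E).
  by apply: MVT_diff_segment => t t01; rewrite line; apply/w_diff/GLpM/GLt.
exists c => //; rewrite -[E in 1%:M + E](scale1r E) -line scale1r mvt diff_gradE line.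
have uN : 1%:M + c *: E \in unitmx by apply/GLp_unitmx/GLt.
by rewrite -frob_inner_mulmxr -mulmxA (mulmxA _ (invmx _)) mulmxV // mul1mx.
Qed.

Lemma mandel_taylor (G E : 'M[R]_d) : GLp G -> frob E <= r0 ->
  `|w (G *m (1%:M + E)) - w G - frob_inner (mandel w G) E| <=
  (C5 * cinv + 2 * C4) * (w G + 1) * frob E ^+ 2.
Proof.
move=> GG E_r0.
have E_half : frob E <= 1/2 by apply: le_trans E_r0 _; rewrite ge_min lexx.
have E_delta : frob E < delta.
  apply: le_lt_trans E_r0 (le_lt_trans (_ : r0 <= delta / 2) _); first by rewrite ge_min lexx orbT.
  by rewrite gtr_pMr // invf_lt1 // ltr1n.
have E1 : frob E < 1 by lra.
have [c /andP[c0 c1] ->] := mean_value_mandel GG E1.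
set Nc := 1%:M + c *: E.
have cE : frob (c *: E) <= frob E by rewrite frobZ ger0_norm // ler_piMl ?frob_ge0.
have cE_half : frob (c *: E) <= 1/2 := le_trans cE E_half.
have GNc : GLp (G *m Nc) by apply: GLpM GG (GLp_add1 _); lra.
have S1S0 : frob (mandel w (G *m Nc) - mandel w G) <= C5 * frob E * (w G + 1).
  rewrite -frobN opprB; apply: le_trans (mandel_lipschitz GG _ GNc) _;
    rewrite /Nc addrAC subrr add0r; first exact: le_lt_trans cE E_delta.
  by rewrite ler_wpM2r ?ler_wpM2l ?addr_ge0 ?w_ge0.
have Mc1 : frob (invmx Nc - 1%:M) <= 2 * frob E.
  by apply: le_trans (frob_invmx_add1_sub1 cE_half) _; rewrite ler_wpM2l.
have Mcb : frob (invmx Nc) <= cinv := frob_invmx_add1 cE_half.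
apply: le_trans (frob_inner_mulmx_sub_le _ _ _ _) _.
apply: le_trans (_ : C5 * frob E * (w G + 1) * cinv * frob E
    + C4 * (w G + 1) * (2 * frob E) * frob E <= _).
  by apply: lerD; rewrite ?ler_pM ?mulr_ge0 ?frob_ge0 ?mandel_le.
lra.
Qed.

Lemma Bstress_taylor (P1 P2 F : 'M[R]_d) (a : R) :
  GLp P1 -> GLp P2 -> GLp F -> frob (invmx P1) <= a ->
  cinv * a * frob (P1 - P2) <= r0 ->
  `| w (F *m invmx P1) - w (F *m invmx P2) - frob_inner (Bstress W x F P1) (P1 - P2) |
    <= (C5 * cinv + 3 * C4) * (cinv * a) ^+ 2 * (w (F *m invmx P1) + 1)
       * frob (P1 - P2) ^+ 2.
Proof.
move=> GP1 GP2 GF P1a small.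
have [uP1 uP2] := (GLp_unitmx GP1, GLp_unitmx GP2).
set D := P1 - P2 in small *; set X := cinv * a * frob D in small *.
have aD : a * frob D <= X.
  by rewrite ler_wpM2r ?frob_ge0 // ler_peMl ?(le_trans (frob_ge0 _) P1a) // lerDr frob_ge0.
have P2b : frob (invmx P2) <= cinv * a.
  apply: le_trans (frob_invmx_perturb uP1 _) _; last by rewrite ler_wpM2l ?addr_ge0 ?frob_ge0.
  apply: le_trans (ler_wpM2r (frob_ge0 _) P1a) (le_trans aD (le_trans small _)).
  by rewrite ge_min lexx.
set E := D *m invmx P2; set G := F *m invmx P1.
have EX : frob E <= X by apply: le_trans (frobM _ _) _; rewrite mulrC ler_wpM2r ?frob_ge0.
have FP2 : F *m invmx P2 = G *m (1%:M + E).
  by rewrite mulmxDr mulmx1 mulmxA mulmxBr mulmxKV // mulmxBl mulmxK // addrC subrK.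
have DQ1 : D *m invmx P1 = E - E *m D *m invmx P1.
  by rewrite -{1}(subrK (invmx P2) (invmx P1)) mulmxDr invmxB // mulmxN !mulmxA addrC.
have ZX : frob (E *m D *m invmx P1) <= X * X.
  rewrite -mulmxA; apply: le_trans (frobM _ _) _; apply: ler_pM; rewrite ?frob_ge0 //.
  by apply: le_trans (frobM _ _) _; apply: le_trans aD; rewrite mulrC ler_wpM2r ?frob_ge0.
have -> : frob_inner (Bstress W x F P1) D =
    - frob_inner (mandel w G) E + frob_inner (mandel w G) (E *m D *m invmx P1).
  by rewrite frob_innerNl frob_inner_mulmxl trmxK DQ1 frob_innerBr opprB addrC.
rewrite FP2 (_ : forall u v s z : R, v - u - (- s + z) = - (u - v - s) - z); last by move=> *; ring.
apply: le_trans (ler_normB _ _) _; rewrite normrN.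
have s_ge0 : 0 <= w G + 1 by rewrite addr_ge0 ?w_ge0.
apply: le_trans (lerD (mandel_taylor (GLpM GF (GLpV GP1)) (le_trans EX small))
  (le_trans (frob_inner_le _ _) (ler_pM (frob_ge0 _) (frob_ge0 _) (mandel_le _) ZX))) _.
  exact/GLpM/GLpV.
apply: le_trans (_ : (C5 * cinv + 2 * C4) * (w G + 1) * X ^+ 2 + C4 * (w G + 1) * (X * X) <= _).
  rewrite lerD2r -/G; apply: ler_wpM2l.
    by rewrite mulr_ge0 // addr_ge0 ?mulr_ge0 ?addr_ge0 ?frob_ge0.
  by rewrite ler_pXn2r ?nnegrE ?frob_ge0 ?(le_trans (frob_ge0 _) EX).
by rewrite /X; lra.
Qed.

End StressEstimates.

Theorem lemma4p5 (R : realType) (d : nat) (Omega : set 'rV[R]_d)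
  (qPhi qF qP qG qgamma qtilde : R)
  (K : 'M[R]_d -> \bar R) (W : 'rV[R]_d -> 'M[R]_d -> \bar R) :
  (* Omega: bounded open set (domain) *)
  open Omega -> bounded_set Omega ->
  (* exponents *)
  1 < qPhi -> 1 < qF -> 1 < qP -> 1 < qG -> 1 < qgamma -> d%:R < qG ->
  (* (K1) *)
  (forall P, GLp P -> K P \is a fin_num) ->
  C2_on (@GLp R d) (fun P => fine (K P)) ->
  (* (K2) *)
  d%:R < qP -> d%:R < qgamma ->
  (exists C1 C2 : R, 0 < C1 /\ 0 < C2 /\
     forall P, GLp P ->
       ((C1 * (frob P `^ qP + (\det P) `^ (- qgamma)) - C2)%:E <= K P)%E) ->
  (* W : Omega x R^{dxd} -> [0, +oo], finite iff F in GL^+(d) *)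
  (forall x, Omega x -> forall F, (0 <= W x F)%E) ->
  (forall x, Omega x -> forall F, W x F \is a fin_num <-> GLp F) ->
  (* (W1) *)
  d%:R < qF ->
  (exists (j : 'rV[R]_d -> R) (C3 : R), 0 < C3 /\
     forall x, Omega x -> forall F,
       ((j x + C3 * frob F `^ qF)%:E <= W x F)%E) ->
  (* (W2) *)
  (exists WW : 'rV[R]_d -> 'rV[R]_(mu d) -> \bar R,
     (forall x, Omega x -> forall F, W x F = WW x (minors F)) /\
     (forall x, Omega x -> forall y, (-oo < WW x y)%E) /\
     (forall x, Omega x -> econvex (WW x)) /\
     (forall x, Omega x -> lower_semicontinuous (WW x))) ->
  (* (W3) *)
  (exists delta C4 C5 : R, 0 < delta /\ 0 < C4 /\ 0 < C5 /\
     forall x, Omega x -> forall F, GLp F ->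
       differentiable (Wre W x) F /\
       frob (F^T *m grad (Wre W x) F) <= C4 * (Wre W x F + 1) /\
       forall N, frob (N - 1%:M) < delta -> GLp (F *m N) ->
         frob (F^T *m grad (Wre W x) F
               - (F *m N)^T *m grad (Wre W x) (F *m N))
           <= C5 * frob (N - 1%:M) * (Wre W x F + 1)) ->
  (* exponent relations *)
  qPhi^-1 = qF^-1 + qP^-1 -> d%:R < qPhi ->
  d%:R < qtilde -> qtilde^-1 = 2 / qgamma + qG^-1 ->
  (* (i) *)
  (forall CP : R, 0 < CP -> exists CB rbar : R, 0 < CB /\ 0 < rbar /\
     forall x, Omega x -> forall P, GLp P -> frob P + frob (invmx P) <= CP ->
     forall F, GLp F -> forall N : 'M[R]_d, frob (N - 1%:M) < rbar ->
       frob (Bstress W x F (N *m P) - Bstress W x F P)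
         <= CB * frob (N - 1%:M) * (Wre W x (F *m invmx P) + 1))
  /\
  (* (ii) *)
  (forall CP : R, 0 < CP -> exists CW rtilde : R, 0 < CW /\ 0 < rtilde /\
     forall x, Omega x -> forall P1 P2, GLp P1 -> GLp P2 ->
     frob P1 + frob (invmx P1) <= CP -> frob (P1 - P2) <= rtilde ->
     forall F, GLp F ->
       `| Wre W x (F *m invmx P1) - Wre W x (F *m invmx P2)
          - frob_inner (Bstress W x F P1) (P1 - P2) |
         <= CW * (Wre W x (F *m invmx P1) + 1) * frob (P1 - P2) ^+ 2).
Proof.
move=> _ _ _ _ _ _ _ _ _ _ _ _ _ W_ge0 _ _ _ _.
move=> [delta [C4 [C5 [delta_gt0 [C4_gt0 [C5_gt0 W3]]]]]] _ _ _ _.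
pose cinv := frob (1%:M : 'M[R]_d) + 1; pose r0 := Num.min (1/2) (delta / 2).
have cinv_gt0 : 0 < cinv by rewrite ltr_wpDl ?frob_ge0.
have r0_gt0 : 0 < r0 by rewrite lt_min; apply/andP; split; lra.
have invmx_le P CP : frob P + frob (invmx P) <= CP -> frob (invmx P) <= CP.
  by move=> PCP; apply: le_trans PCP; rewrite lerDr frob_ge0.
split=> CP CP_gt0.
- exists ((2 * C5 * cinv + 2 * C4) * CP), r0.
  split; first by rewrite mulr_gt0 // addr_gt0 ?mulr_gt0.
  split=> // x xO P GP PCP F GF N N_r0.
  apply: (Bstress_mulmxl_lipschitz (W_ge0 x xO) (ltW C5_gt0)) => //.
  + by move=> F' GF'; have [_ []] := W3 x xO F' GF'.
  + by move=> F' N' GF'; have [_ [_]] := W3 x xO F' GF'; apply.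
  + exact: invmx_le PCP.
  + exact: N_r0.
- exists ((C5 * cinv + 3 * C4) * (cinv * CP) ^+ 2), (r0 / (cinv * CP)).
  split; first by rewrite mulr_gt0 ?exprn_gt0 ?mulr_gt0 // addr_gt0 ?mulr_gt0.
  split=> [|x xO P1 P2 GP1 GP2 PCP D_small F GF]; first by rewrite divr_gt0 ?mulr_gt0.
  apply: (Bstress_taylor delta_gt0 (W_ge0 x xO) (ltW C4_gt0) (ltW C5_gt0)) => //.
  + by move=> F' GF'; have [] := W3 x xO F' GF'.
  + by move=> F' GF'; have [_ []] := W3 x xO F' GF'.
  + by move=> F' N' GF'; have [_ [_]] := W3 x xO F' GF'; apply.
  + exact: invmx_le PCP.
  + by rewrite -ler_pdivlMl ?mulr_gt0 // mulrC.
Qed.
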